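(* Let $G$ be a connected graph, let $uv\in E(G)$, and let $G'$ be the graph obtained from $G$ by subdividing the edge $uv$ three times (i.e., replacing the edge $uv$ by a path $u x_1 x_2 x_3 v$ with three new vertices $x_1,x_2,x_3$). If $\gamma^{d}_2(G)\leq \frac{|V(G)|}{3}$, then $\gamma^{d}_2(G')\leq \frac{|V(G')|}{3}$.
   Context: All graphs are finite and simple. A set $S$ of vertices of a graph $G$ is a disjunctive dominating set of $G$ if every vertex not in $S$ is adjacent to a vertex of $S$ or has at least two vertices of $S$ at distance exactly $2$ from it in $G$. The disjunctive domination number $\gamma^{d}_2(G)$ is the minimum cardinality of a disjunctive dominating set of $G$. *)

From mathcomp Require Import all_boot.
Set Implicit Arguments. Unset Strict Implicit. Unset Printing Implicit Defensive.

Section Graphs.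
Variable T : finType.
Implicit Types (e : rel T) (S : {set T}).

Definition simple_graph e := symmetric e /\ irreflexive e.

Definition connected_graph e := forall x y : T, connect e x y.

Definition dist2 e (x y : T) : bool :=
  [&& x != y, ~~ e x y & [exists z, e x z && e z y]].

Definition disj_dom e S : bool :=
  [forall x, (x \notin S) ==>
     ([exists y in S, e x y] || (1 < #|[set y in S | dist2 e x y]|))].

(* minimum cardinality of a disjunctive dominating set (V(G) itself is one) *)
Definition gamma_d2 e : nat :=
  \big[minn/#|T|]_(S : {set T} | disj_dom e S) #|S|.
End Graphs.

(* Subdividing the edge uv three times: new vertices inr 0, inr 1, inr 2
   (= x1, x2, x3), path u - x1 - x2 - x3 - v, edge uv removed. *)
Definition subdiv3 (T : finType) (e : rel T) (u v : T) : rel (T + 'I_3) :=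
  fun a b =>
    match a, b with
    | inl a, inl b => e a b && ~~ (((a == u) && (b == v)) || ((a == v) && (b == u)))
    | inl a, inr i => ((a == u) && (val i == 0)) || ((a == v) && (val i == 2))
    | inr i, inl a => ((a == u) && (val i == 0)) || ((a == v) && (val i == 2))
    | inr i, inr j => ((val i).+1 == val j) || ((val j).+1 == val i)
    end.

From mathcomp Require Import all_boot order zify.
Set Implicit Arguments. Unset Strict Implicit. Unset Printing Implicit Defensive.

(* Take a minimum disjunctive dominating set S of G and add one of the three
   new vertices: x2 if u, v are both in S or neither is dominated by S; x3 if
   v is not in S but u is dominated by S; and symmetrically x1 (reversing the
   path x1 x2 x3 swaps the roles of u and v).  The result disjunctively
   dominates G', so 3 gamma(G') <= 3 gamma(G) + 3 <= |V(G)| + 3 = |V(G')|. *)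

Section DisjunctiveDomination.
Variables (G : finType) (e : rel G).
Implicit Types (S : {set G}) (x y : G).

Definition disj_dominated S x :=
  [exists y in S, e x y] || (1 < #|[set y in S | dist2 e x y]|).

Definition dominated S x := (x \in S) || [exists y in S, e x y].

Lemma disj_domP S :
  reflect (forall x, x \notin S -> disj_dominated S x) (disj_dom e S).
Proof. by apply: (iffP forallP) => dom x; apply/implyP; apply: dom. Qed.

Lemma disj_dominated_adj S x y : y \in S -> e x y -> disj_dominated S x.
Proof. by move=> yS xy; apply/orP; left; apply/exists_inP; exists y. Qed.

Lemma disj_dominated_dist2 S x y1 y2 : y1 \in S -> y2 \in S -> y1 != y2 ->
  dist2 e x y1 -> dist2 e x y2 -> disj_dominated S x.
Proof.
move=> y1S y2S y12 d1 d2; apply/orP; right.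
by apply/card_gt1P; exists y1, y2; rewrite !inE y1S y2S d1 d2.
Qed.

Variant disj_dominated_spec S x : Prop :=
  | DisjDominatedAdj y of y \in S & e x y
  | DisjDominatedDist2 y1 y2 of y1 \in S & y2 \in S & y1 != y2
      & dist2 e x y1 & dist2 e x y2.

Lemma disj_dominatedP S x : disj_dominated S x -> disj_dominated_spec S x.
Proof.
case/orP => [/exists_inP[y yS xy] | /card_gt1P[y1 [y2 []]]].
  exact: DisjDominatedAdj xy.
rewrite !inE => /andP[y1S d1] /andP[y2S d2] y12.
exact: DisjDominatedDist2 y1S y2S y12 d1 d2.
Qed.

Lemma gamma_d2_min S : disj_dom e S -> gamma_d2 e <= #|S|.
Proof. exact: (@Order.TotalTheory.bigmin_le_cond _ nat). Qed.

Lemma gamma_d2_attained : exists2 S, disj_dom e S & #|S| = gamma_d2 e.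
Proof.
have [|S _|S dS min_S] :=
  @Order.TotalTheory.eq_bigmin _ nat _ #|G| setT (disj_dom e) (fun S => #|S|).
- by apply/forallP => x; rewrite inE.
- exact: max_card.
by exists S; last exact/esym/min_S.
Qed.

End DisjunctiveDomination.

Section GraphIsomorphism.
Variables (G H : finType) (e : rel G) (e' : rel H) (f : G -> H).
Hypotheses (f_bij : bijective f) (f_mono : {mono f : x y / e x y >-> e' x y}).

Lemma dist2_bij x y : dist2 e' (f x) (f y) = dist2 e x y.
Proof.
have [g _ gK] := f_bij.
rewrite /dist2 (inj_eq (bij_inj f_bij)) f_mono; congr [&& _, _ & _].
apply/existsP/existsP => [[z] | [z]]; last by exists (f z); rewrite !f_mono.
by rewrite -(gK z) !f_mono; exists (g z).
Qed.

Lemma disj_dom_bij S : disj_dom e S -> disj_dom e' (f @: S).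
Proof.
have [g _ gK] := f_bij; have f_inj := bij_inj f_bij.
move=> /disj_domP dom; apply/disj_domP => x'.
rewrite -(gK x') mem_imset // => /dom.
case/disj_dominatedP => [y yS xy | y1 y2 y1S y2S y12 d1 d2].
  by apply: (disj_dominated_adj (y := f y)); rewrite ?mem_imset ?f_mono.
apply: (disj_dominated_dist2 (y1 := f y1) (y2 := f y2));
  by rewrite ?mem_imset ?(inj_eq f_inj) ?dist2_bij.
Qed.

End GraphIsomorphism.

Section Subdivision.
Variables (T : finType) (e : rel T) (u v : T).
Hypothesis u_neq_v : u != v.
Implicit Types (S : {set T}) (a b w y z : T) (k : 'I_3).

Local Notation G' := (subdiv3 e u v).
Local Notation x1 := (inr ord0 : T + 'I_3).
Local Notation x2 := (inr (Ordinal (isT : 1 < 3)) : T + 'I_3).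
Local Notation x3 := (inr ord_max : T + 'I_3).

Lemma mem_inl_setU1 S k w : (inl w \in inr k |: inl @: S) = (w \in S).
Proof. by rewrite in_setU1 /= mem_imset //; apply: inl_inj. Qed.

Lemma subdiv3_inl_l a b : a != u -> a != v -> G' (inl a) (inl b) = e a b.
Proof. by move=> /negbTE au /negbTE av; rewrite /= au av andbT. Qed.

Lemma subdiv3_inl_r a b : b != u -> b != v -> G' (inl a) (inl b) = e a b.
Proof. by move=> /negbTE bu /negbTE bv; rewrite /= bu bv !andbF andbT. Qed.

Lemma subdiv3_inl_u b : b != v -> G' (inl u) (inl b) = e u b.
Proof. by move=> /negbTE bv; rewrite /= eqxx bv (negbTE u_neq_v) andbT. Qed.

Lemma dist2_subdiv3 a b : dist2 e a b ->
  (forall z, e a z -> e z b -> G' (inl a) (inl z) && G' (inl z) (inl b)) ->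
  dist2 G' (inl a) (inl b).
Proof.
case/and3P => ab not_ab /existsP[z /andP[az zb]] keep.
apply/and3P; split; first by rewrite (inj_eq inl_inj).
  by rewrite /= negb_and not_ab.
by apply/existsP; exists (inl z); apply: keep.
Qed.

Lemma dist2_subdiv3_x3 w : w != u -> w != v -> e w v -> dist2 G' (inl w) x3.
Proof.
move=> /negbTE wu /negbTE wv wv_adj; apply/and3P; split => //=.
  by rewrite wu wv.
by apply/existsP; exists (inl v); rewrite /= wv_adj wu wv eqxx orbT.
Qed.

Lemma dist2_subdiv3_x1 s : s != u -> s != v -> e u s -> dist2 G' x1 (inl s).
Proof.
move=> su sv us; apply/and3P; split => //=.
  by rewrite (negbTE su) (negbTE sv).
by apply/existsP; exists (inl u); rewrite subdiv3_inl_u // us /= eqxx.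
Qed.

Lemma dist2_subdiv3_x1_x3 : dist2 G' x1 x3.
Proof. by apply/and3P; split => //; apply/existsP; exists x2. Qed.

(* Deleting uv can destroy all the distance-2 paths to at most one witness
   [y0]; the new vertex [inr k] then takes its place. *)
Lemma disj_dominated_subdiv3 S k w y0 :
  (forall y, y \in S -> e w y -> G' (inl w) (inl y)) ->
  (forall y, y \in S -> dist2 e w y ->
     dist2 G' (inl w) (inl y) \/ y = y0 /\ dist2 G' (inl w) (inr k)) ->
  disj_dominated e S w -> disj_dominated G' (inr k |: inl @: S) (inl w).
Proof.
move=> keep_adj keep_dist2.
have inlS y : y \in S -> inl y \in inr k |: inl @: S by rewrite mem_inl_setU1.
have kS : inr k \in inr k |: inl @: S by apply: setU11.
case/disj_dominatedP => [y yS wy | y1 y2 y1S y2S y12 d1 d2].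
  exact: disj_dominated_adj (inlS y yS) (keep_adj y yS wy).
case: (keep_dist2 y1 y1S d1) (keep_dist2 y2 y2S d2)
  => [d1' | [e1 d1']] [d2' | [e2 d2']].
- apply: disj_dominated_dist2 (inlS _ y1S) (inlS _ y2S) _ d1' d2'.
  by rewrite (inj_eq inl_inj).
- exact: disj_dominated_dist2 (inlS _ y1S) kS _ d1' d2'.
- exact: disj_dominated_dist2 kS (inlS _ y2S) _ d1' d2'.
- by rewrite e1 e2 eqxx in y12.
Qed.

Lemma disj_dominated_subdiv3_kept S k w :
  (forall y, y \in S -> e w y -> G' (inl w) (inl y)) ->
  (forall y, y \in S -> dist2 e w y -> dist2 G' (inl w) (inl y)) ->
  disj_dominated e S w -> disj_dominated G' (inr k |: inl @: S) (inl w).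
Proof.
move=> keep_adj keep_dist2; apply: (disj_dominated_subdiv3 (y0 := w)) => //.
by move=> y yS d; left; apply: keep_dist2.
Qed.

Lemma disj_dominated_subdiv3_x2 S i :
  inr i \notin x2 |: inl @: S -> disj_dominated G' (x2 |: inl @: S) (inr i).
Proof.
rewrite in_setU1 negb_or => /andP[i_neq_x2 _].
apply: disj_dominated_adj (setU11 _ _) _.
by move: i_neq_x2; case: i => -[|[|[|]]].
Qed.

Lemma disj_dom_subdiv3_ends S : disj_dom e S -> u \in S -> v \in S ->
  disj_dom G' (x2 |: inl @: S).
Proof.
move=> /disj_domP dom uS vS; apply/disj_domP => -[w|i]; last first.
  exact: disj_dominated_subdiv3_x2.
rewrite mem_inl_setU1 => wS.
have wu : w != u by apply: contraNneq wS => ->.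
have wv : w != v by apply: contraNneq wS => ->.
have [wu_adj | not_wu] := boolP (e w u).
  apply: (disj_dominated_adj (y := inl u)); first by rewrite mem_inl_setU1.
  by rewrite subdiv3_inl_l.
have [wv_adj | not_wv] := boolP (e w v).
  apply: (disj_dominated_adj (y := inl v)); first by rewrite mem_inl_setU1.
  by rewrite subdiv3_inl_l.
apply: disj_dominated_subdiv3_kept (dom w wS) => [y _ wy | y _ d].
  by rewrite subdiv3_inl_l.
apply: (dist2_subdiv3 d) => z wz zy.
have zu : z != u by apply: contraNneq not_wu => <-.
have zv : z != v by apply: contraNneq not_wv => <-.
by rewrite !subdiv3_inl_l ?wz.
Qed.

Lemma disj_dom_subdiv3_far S : disj_dom e S ->
  ~~ dominated e S u -> ~~ dominated e S v -> disj_dom G' (x2 |: inl @: S).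
Proof.
move=> /disj_domP dom; rewrite !negb_or => /andP[uS /exists_inPn not_u].
move=> /andP[vS /exists_inPn not_v].
have S_uv y : y \in S -> y != u /\ y != v.
  by move=> yS; split; [apply: contraNneq uS | apply: contraNneq vS] => <-.
apply/disj_domP => -[w|i]; last exact: disj_dominated_subdiv3_x2.
rewrite mem_inl_setU1 => wS.
apply: disj_dominated_subdiv3_kept (dom w wS) => [y yS wy | y yS d].
  by have [yu yv] := S_uv y yS; rewrite subdiv3_inl_r.
apply: (dist2_subdiv3 d) => z wz zy.
have [yu yv] := S_uv y yS.
have zu : z != u by apply: contraTneq zy => ->; apply: not_u.
have zv : z != v by apply: contraTneq zy => ->; apply: not_v.
by rewrite !subdiv3_inl_r ?wz.
Qed.

Lemma disj_dominated_subdiv3_x1 S : v \notin S -> dominated e S u ->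
  disj_dominated G' (x3 |: inl @: S) x1.
Proof.
move=> vS dom_u; have [uS | uS] := boolP (u \in S).
  apply: (disj_dominated_adj (y := inl u)); first by rewrite mem_inl_setU1.
  by rewrite /= eqxx.
rewrite /dominated (negbTE uS) in dom_u; case/exists_inP: dom_u => s sS us.
have su : s != u by apply: contraNneq uS => <-.
have sv : s != v by apply: contraNneq vS => <-.
apply: (disj_dominated_dist2 (y1 := x3) (y2 := inl s)) => //.
- exact: setU11.
- by rewrite mem_inl_setU1.
- exact: dist2_subdiv3_x1_x3.
- exact: dist2_subdiv3_x1.
Qed.

Lemma disj_dom_subdiv3_x3 S : disj_dom e S -> v \notin S -> dominated e S u ->
  disj_dom G' (x3 |: inl @: S).
Proof.
move=> /disj_domP dom vS dom_u; apply/disj_domP => -[w|i]; last first.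
  case: i => -[|[|[|//]]] i_lt i_nS.
  - rewrite (_ : Ordinal i_lt = ord0); last exact: val_inj.
    exact: disj_dominated_subdiv3_x1.
  - by apply: disj_dominated_adj (setU11 _ _) _.
  - by move: i_nS; rewrite in_setU1.
rewrite mem_inl_setU1 => wS.
have [-> | wv] := eqVneq w v.
  by apply: disj_dominated_adj (setU11 _ _) _; rewrite /= eqxx orbT.
have [wu_eq | wu] := eqVneq w u.
  rewrite wu_eq in wS *; rewrite /dominated (negbTE wS) in dom_u.
  case/exists_inP: dom_u => s sS us.
  apply: (disj_dominated_adj (y := inl s)); first by rewrite mem_inl_setU1.
  by rewrite subdiv3_inl_u //; apply: contraNneq vS => <-.
apply: (disj_dominated_subdiv3 (y0 := u)) (dom w wS) => [y _ wy | y yS d].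
  by rewrite subdiv3_inl_l.
have [/andP[/eqP-> wv_adj] | kept] := boolP ((y == u) && e w v).
  by right; split; last exact: dist2_subdiv3_x3.
left; apply: (dist2_subdiv3 d) => z wz zy.
have yv : y != v by apply: contraNneq vS => <-.
rewrite subdiv3_inl_l // wz /= zy (negbTE yv) andbF /=.
by apply: contra kept => /andP[/eqP zv ->]; rewrite -zv wz.
Qed.

End Subdivision.

Definition flip3 {T : Type} (x : T + 'I_3) : T + 'I_3 :=
  if x is inr i then inr (rev_ord i) else x.

Lemma flip3K (T : Type) : involutive (@flip3 T).
Proof. by case=> //= i; rewrite rev_ordK. Qed.

Lemma subdiv3_flip3 (T : finType) (e : rel T) u v :
  {mono @flip3 T : x y / subdiv3 e u v x y >-> subdiv3 e v u x y}.
Proof.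
case=> [a|[[|[|[|//]]] ?]] [b|[[|[|[|//]]] ?]] //=; first by rewrite orbC.
all: by [case: (a == u); case: (a == v) | case: (b == u); case: (b == v)].
Qed.

Lemma subdiv3_disj_dom (T : finType) (e : rel T) (u v : T) (S : {set T}) :
  u != v -> disj_dom e S ->
  exists2 S', disj_dom (subdiv3 e u v) S' & #|S'| <= #|S|.+1.
Proof.
move=> u_neq_v dS.
have card_add (k : 'I_3) : #|inr k |: inl @: S| <= #|S|.+1.
  by rewrite cardsU1 (card_imset _ inl_inj) -[#|S|.+1]add1n leq_add2r leq_b1.
have mirror : u \notin S -> dominated e S v ->
    exists2 S', disj_dom (subdiv3 e u v) S' & #|S'| <= #|S|.+1.
  move=> uS dom_v; exists (flip3 @: (inr ord_max |: inl @: S)).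
    apply: (disj_dom_bij (inv_bij (@flip3K T)) (subdiv3_flip3 e v u)).
    by apply: disj_dom_subdiv3_x3; rewrite 1?eq_sym.
  exact: leq_trans (leq_imset_card _ _) (card_add _).
have [vS | vS] := boolP (v \in S).
  have [uS | uS] := boolP (u \in S).
    by eexists; [apply: disj_dom_subdiv3_ends | apply: card_add].
  by apply: mirror => //; rewrite /dominated vS.
have [dom_u | not_u] := boolP (dominated e S u).
  by eexists; [apply: disj_dom_subdiv3_x3 | apply: card_add].
have [dom_v | not_v] := boolP (dominated e S v).
  by apply: mirror => //; apply: contra not_u => uS; rewrite /dominated uS.
by eexists; [apply: disj_dom_subdiv3_far | apply: card_add].
Qed.

Theorem lemma2p3 (T : finType) (e : rel T) (u v : T) :
  simple_graph e -> connected_graph e -> e u v ->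
  3 * gamma_d2 e <= #|T| ->
  3 * gamma_d2 (subdiv3 e u v) <= #|{: T + 'I_3}|.
Proof.
move=> [_ e_irr] _ e_uv gamma_le.
have u_neq_v : u != v by apply: contraTneq e_uv => ->; rewrite e_irr.
have [S dS card_S] := gamma_d2_attained e.
have [S' dS' card_S'] := subdiv3_disj_dom u_neq_v dS.
have := gamma_d2_min dS'.
rewrite card_sum card_ord; lia.
Qed.
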